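(* Let $d \ge 2$. Let $\rho_T$ be a density matrix on $\mathbb{C}^2$ with eigenvalues, sorted in decreasing order, $\{\alpha, 1-\alpha\}$, and let $\rho_A$ be a density matrix on $\mathbb{C}^d$ with eigenvalues, sorted in decreasing order, $\{\beta_1, \beta_2, \dots, \beta_d\}$. Consider the joint state $\rho_{T,A} = \rho_T \otimes \rho_A$ on $\mathbb{C}^2 \otimes \mathbb{C}^d$ and, for a unitary $U$ on $\mathbb{C}^2\otimes\mathbb{C}^d$, the purification channel $\mathcal{E}_U(\rho_{T,A}) = \mathrm{Tr}_A\!\left(U \rho_{T,A} U^\dagger\right)$. Then among all unitaries $U$ on $\mathbb{C}^2\otimes\mathbb{C}^d$, a unitary maximizing the largest eigenvalue of the output target state $\mathcal{E}_U(\rho_{T,A})$ can always be chosen to be a permutation matrix with respect to a product eigenbasis $\{|a\rangle_T|b\rangle_A\}$ of $\rho_T\otimes\rho_A$ (where $\{|a\rangle_T\}$ and $\{|b\rangle_A\}$ are eigenbases of $\rho_T$ and $\rho_A$).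
   Context: $\mathrm{Tr}_A$ denotes the partial trace over the auxiliary system $\mathbb{C}^d$. The purity of the output target qubit is measured by its largest eigenvalue (equivalently by its polarization $\epsilon$, where a diagonal qubit state with eigenvalues $\frac{e^{\epsilon}}{e^\epsilon+e^{-\epsilon}}, \frac{e^{-\epsilon}}{e^\epsilon+e^{-\epsilon}}$ has polarization $\epsilon$); ''optimal'' means maximizing this purity. *)

From mathcomp Require Import all_boot all_order all_algebra.
From mathcomp Require Import fingroup perm spectral mxtens.
Set Implicit Arguments. Unset Strict Implicit. Unset Printing Implicit Defensive.
Import Order.TTheory GRing.Theory Num.Theory.
Local Open Scope ring_scope.
Local Open Scope sesquilinear_scope.

Definition adjmx (C : numClosedFieldType) m n (A : 'M[C]_(m, n)) : 'M[C]_(n, m) :=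
  A ^t*.

Definition unitaryP (C : numClosedFieldType) n (U : 'M[C]_n) : Prop :=
  U \is unitarymx.

Definition is_density (C : numClosedFieldType) n (rho : 'M[C]_n) : Prop :=
  [/\ adjmx rho = rho,
      (forall v : 'rV[C]_n, 0 <= (v *m rho *m adjmx v) 0 0)
    & \tr rho = 1].

Definition is_eigenbasis (C : numClosedFieldType) n (rho V : 'M[C]_n)
  (lam : 'rV[C]_n) : Prop :=
  unitaryP V /\ rho = V *m diag_mx lam *m adjmx V.

Definition ptrace2 (C : numClosedFieldType) m n (M : 'M[C]_(m * n)) : 'M[C]_m :=
  \matrix_(i, j) \sum_(b < n) M (mxtens_index (i, b)) (mxtens_index (j, b)).

Definition purif_channel (C : numClosedFieldType) d (U rho : 'M[C]_(2 * d)) : 'M[C]_2 :=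
  ptrace2 (U *m rho *m adjmx U).

(* Write rhoT (x) rhoA = W diag(mu) W^dagger with W = VT (x) VA a product
   eigenbasis. For a unitary U put X = U W; if v is an eigenvector of
   Tr_A (X diag(mu) X^dagger) for the eigenvalue l, then
   l |v|^2 = sum_k mu_k w_k with w_k = sum_b |<v (x) e_b, X e_k>|^2.
   By Cauchy-Schwarz 0 <= w_k <= |v|^2, and by unitarity of X the w_k sum to
   d |v|^2, so the bathtub principle bounds l by the sum of the d largest
   mu_k. A permutation of the product eigenbasis moving these d eigenvalues
   into the block |0>_T (x) C^d attains the bound. *)

From mathcomp Require Import all_boot all_order all_algebra.
From mathcomp Require Import fingroup perm sesquilinear spectral mxtens.
From mathcomp Require Import ring.
Import Order.TTheory GRing.Theory Num.Theory.
Local Open Scope ring_scope.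
Local Open Scope sesquilinear_scope.

Section Bathtub.
Context {R : numDomainType} {I : finType}.

Lemma bathtub_le (S : {pred I}) (mu w : I -> R) (N m0 : R) :
  (forall i, 0 <= w i <= N) -> \sum_i w i = #|S|%:R * N ->
  (forall i, i \in S -> m0 <= mu i) -> (forall i, i \notin S -> mu i <= m0) ->
  \sum_i mu i * w i <= N * \sum_(i in S) mu i.
Proof.
move=> w_bd w_sum muS muSc.
(* Compare with the greedy allocation [w i = N * (i \in S)]; since [m0]
   separates the values of [mu] on and off [S], the corrections cancel. *)
have term i : mu i * w i <=
    (if i \in S then N * mu i else 0) + m0 * (w i - if i \in S then N else 0).
  have /andP[w_ge0 w_leN] := w_bd i; rewrite -subr_ge0.
  case: ifPn => [iS | iSc].
    have -> : N * mu i + m0 * (w i - N) - mu i * w i = (mu i - m0) * (N - w i).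
      by ring.
    by rewrite mulr_ge0 // subr_ge0 // muS.
  have -> : 0 + m0 * (w i - 0) - mu i * w i = (m0 - mu i) * w i by ring.
  by rewrite mulr_ge0 // subr_ge0 muSc.
apply: le_trans (ler_sum _ (fun i _ => term i)) _.
rewrite big_split /= -big_mkcond -!mulr_sumr sumrB w_sum -big_mkcond /=.
by rewrite sumr_const mulr_natl subrr mulr0 addr0.
Qed.

End Bathtub.

Lemma sort_perm_exists {R : numDomainType} {n} {f : 'I_n -> R} :
  (forall i, f i \is Num.real) ->
  exists s : 'S_n, forall i j : 'I_n, (i <= j)%N -> f (s j) <= f (s i).
Proof.
case: n f => [|n] f f_real; first by exists 1%g => -[].
pose r i j := f j <= f i.
have r_total : total r by move=> i j; rewrite /r real_leVge.
have r_trans : transitive r by move=> i j k /= fij fjk; exact: le_trans fjk fij.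
have r_refl : reflexive r by move=> i; rewrite /r.
pose sorted_enum := sort r (enum 'I_n.+1).
have size_sorted : size sorted_enum = n.+1 by rewrite size_sort size_enum_ord.
have nth_inj : injective (fun i : 'I_n.+1 => nth ord0 sorted_enum i).
  move=> i j /eqP; rewrite nth_uniq ?size_sorted ?sort_uniq ?enum_uniq //.
  by move/eqP/val_inj.
exists (perm nth_inj) => i j le_ij; rewrite !permE.
apply: (sorted_leq_nth r_trans r_refl) => //; rewrite ?inE ?size_sorted //.
exact: sort_sorted r_total _.
Qed.

Lemma big_mxtens_index {V : nmodType} m n (F : 'I_(m * n) -> V) :
  \sum_k F k = \sum_(i < m) \sum_(j < n) F (mxtens_index (i, j)).
Proof.
rewrite pair_big (reindex (@mxtens_index m n)) /=; last first.
  by exists (@mxtens_unindex m n) => k _; [apply: mxtens_indexK | apply: mxtens_unindexK].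
by apply: eq_bigr => -[].
Qed.

Lemma big_mxtens_first_block {V : nmodType} m n (F : 'I_(m.+1 * n) -> V) :
  \sum_(k : 'I_(m.+1 * n) | (k < n)%N) F k = \sum_(j < n) F (mxtens_index (ord0, j)).
Proof.
rewrite big_mkcond big_mxtens_index big_ord_recl /=.
rewrite [X in _ + X]big1 ?addr0 => [|i _]; last first.
  by apply: big1 => j _; rewrite /= ltnNge mulSn -addnA leq_addr.
by apply: eq_bigr => j _; rewrite /= ltn_ord.
Qed.

Lemma big_perm_first_block {V : nmodType} m n (s : 'S_(m.+1 * n))
    (F : 'I_(m.+1 * n) -> V) :
  \sum_(k | (s^-1%g k < n)%N) F k = \sum_(j < n) F (s (mxtens_index (ord0, j))).
Proof.
rewrite (reindex_inj (@perm_inj _ s)) /=.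
under eq_bigl do rewrite permK.
exact: big_mxtens_first_block (F \o s).
Qed.

Definition tensrv {R : pzRingType} {m n} (a : 'rV[R]_m) (b : 'rV[R]_n) : 'rV[R]_(m * n) :=
  \row_k (a 0 (mxtens_unindex k).1 * b 0 (mxtens_unindex k).2).

Section Tensor.
Context {R : comPzRingType} {m n : nat}.

Lemma tensmx1 : (1%:M : 'M[R]_m) *t (1%:M : 'M[R]_n) = 1%:M.
Proof.
apply/matrixP => p q.
case: (mxtens_indexP p) => i b; case: (mxtens_indexP q) => j c.
by rewrite tensmxE !mxE (inj_eq (can_inj (@mxtens_indexK m n))) xpair_eqE -natrM mulnb.
Qed.

Lemma diag_mx_tens (a : 'rV[R]_m) (b : 'rV[R]_n) :
  diag_mx a *t diag_mx b = diag_mx (tensrv a b).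
Proof.
apply/matrixP => p q.
case: (mxtens_indexP p) => i b'; case: (mxtens_indexP q) => j c.
rewrite tensmxE !mxE (inj_eq (can_inj (@mxtens_indexK m n))) xpair_eqE mxtens_indexK /=.
by case: (i == j); case: (b' == c); rewrite ?mulr0 ?mul0r ?mulr1n ?mulr0n.
Qed.

End Tensor.

Section Unitary.
Context {C : numClosedFieldType}.

Lemma trmxC_mul m n p (A : 'M[C]_(m, n)) (B : 'M[C]_(n, p)) :
  (A *m B)^t* = B^t* *m A^t*.
Proof. by rewrite trmx_mul map_mxM. Qed.

Lemma trmxC_tens m n p q (A : 'M[C]_(m, n)) (B : 'M[C]_(p, q)) :
  (A *t B)^t* = A^t* *t B^t*.
Proof. by apply/matrixP => i j; rewrite !mxE rmorphM. Qed.

Lemma unitarymx_trCmul {n} {M : 'M[C]_n} : M \is unitarymx -> M^t* *m M = 1%:M.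
Proof. by move=> M_unitary; rewrite -[M^t*]mul1mx mulmxKtV. Qed.

Lemma unitarymx_col_norm {n} {M : 'M[C]_n} k :
  M \is unitarymx -> \sum_i `|M i k| ^+ 2 = 1.
Proof.
move=> /unitarymx_trCmul /matrixP /(_ k k); rewrite !mxE eqxx mulr1n => <-.
by apply: eq_bigr => i _; rewrite !mxE normCKC.
Qed.

Lemma tensmx_unitary m n (A : 'M[C]_m) (B : 'M[C]_n) :
  A \is unitarymx -> B \is unitarymx -> A *t B \is unitarymx.
Proof.
move=> /unitarymxP A_unitary /unitarymxP B_unitary; apply/unitarymxP.
by rewrite trmxC_tens tensmx_mul A_unitary B_unitary tensmx1.
Qed.

Lemma perm_mx_unitary n (s : 'S_n) : (perm_mx s : 'M[C]_n) \is unitarymx.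
Proof.
apply/unitarymxP; rewrite tr_perm_mx map_perm_mx.
by rewrite -perm_mxM mulgV perm_mx1.
Qed.

Lemma perm_mx_conj_diag n (s : 'S_n) (a : 'rV[C]_n) :
  perm_mx s *m diag_mx a *m (perm_mx s)^t* = diag_mx (\row_k a 0 (s k)).
Proof.
rewrite tr_perm_mx map_perm_mx -col_permE -row_permE.
by apply/matrixP => i j; rewrite !mxE (inj_eq perm_inj).
Qed.

Lemma rowsub_unitarymx m n p (f : 'I_p -> 'I_m) (M : 'M[C]_(m, n)) :
  injective f -> M \is unitarymx -> rowsub f M \is unitarymx.
Proof.
move=> f_inj /row_unitarymxP M_rows; apply/row_unitarymxP => i j.
by rewrite !row_rowsub M_rows (inj_eq f_inj).
Qed.

Lemma dotmx_mulmx_unitary m n (R : 'M[C]_(m, n)) (u v : 'rV[C]_m) :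
  R \is unitarymx -> dotmx (u *m R) (v *m R) = dotmx u v.
Proof. by move=> R_unitary; rewrite !dotmxE trmxC_mul mulmxA mulmxtVK. Qed.

Lemma dotmx_normE n (u : 'rV[C]_n) : dotmx u u = \sum_k `|u 0 k| ^+ 2.
Proof. by rewrite dotmxE mxE; apply: eq_bigr => k _; rewrite !mxE normCK. Qed.

Lemma diag_mx_form n (y a : 'rV[C]_n) :
  (y *m diag_mx a *m y^t*) 0 0 = \sum_k a 0 k * `|y 0 k| ^+ 2.
Proof.
rewrite mul_mx_diag mxE; apply: eq_bigr => k _.
by rewrite !mxE normCK; ring.
Qed.

Lemma eigenvalue_unitary_conj_diag n (V : 'M[C]_n) (a : 'rV[C]_n) i :
  V \is unitarymx -> eigenvalue (V *m diag_mx a *m V^t*) (a 0 i).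
Proof.
move=> V_unitary; apply/eigenvalueP; exists (delta_mx 0 i *m V^t*).
  by rewrite !mulmxA mulmxKtV // -[_ *m diag_mx a]rowE row_diag_mx scalemxAl.
apply/eqP => /(congr1 (mulmx^~ V)) /=; rewrite mulmxKtV // mul0mx.
by move/matrixP/(_ 0 i); rewrite !mxE !eqxx => /eqP; rewrite oner_eq0.
Qed.

End Unitary.

Section Eigenbasis.
Context {C : numClosedFieldType}.

Lemma hermitian_eigenbasis {n} {rho : 'M[C]_n} :
  adjmx rho = rho -> is_eigenbasis rho ((spectralmx rho)^t*) (spectral_diag rho).
Proof.
rewrite /adjmx => rho_herm.
split; first by rewrite /unitaryP trmxC_unitary spectral_unitarymx.
have rho_normal : rho \is normalmx by apply/normalmxP; rewrite rho_herm.
rewrite /adjmx trmxCK -invmx_unitary ?spectral_unitarymx //.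
exact/orthomx_spectralP.
Qed.

Lemma density_eigenvalue_ge0 {n} {rho V : 'M[C]_n} {lam} i :
  is_density rho -> is_eigenbasis rho V lam -> 0 <= lam 0 i.
Proof.
move=> [_ rho_psd _] [V_unitary rhoE].
have := rho_psd (delta_mx 0 i *m V^t*).
rewrite rhoE /adjmx trmxC_mul trmxCK !mulmxA !mulmxKtV //.
rewrite -[_ *m diag_mx lam]rowE row_diag_mx -scalemxAl mxE -dotmxE dotmx_normE.
rewrite (bigD1 i) //= big1 => [|k ki]; last by rewrite !mxE (negPf ki) normr0 expr0n.
by rewrite !mxE !eqxx /= addr0 normr1 expr1n mulr1.
Qed.

Lemma tensmx_eigenbasis {m n} {rT VT : 'M[C]_m} {rA VA : 'M[C]_n} {lT lA} :
  is_eigenbasis rT VT lT -> is_eigenbasis rA VA lA ->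
  is_eigenbasis (rT *t rA) (VT *t VA) (tensrv lT lA).
Proof.
move=> [VT_unitary ->] [VA_unitary ->]; split; first exact: tensmx_unitary.
by rewrite /adjmx trmxC_tens -!tensmx_mul diag_mx_tens.
Qed.

End Eigenbasis.

Definition tens_block {R : Type} {m n p} (X : 'M[R]_(m * n, p)) (b : 'I_n) :
  'M[R]_(m, p) :=
  rowsub (fun i => mxtens_index (i, b)) X.

Lemma tens_blockE {R : Type} {m n p} (X : 'M[R]_(m * n, p)) b i k :
  tens_block X b i k = X (mxtens_index (i, b)) k.
Proof. by rewrite mxE. Qed.

Section PartialTrace.
Context {C : numClosedFieldType} {m n : nat}.

Lemma ptrace2_conj p (X : 'M[C]_(m * n, p)) (D : 'M[C]_p) :
  ptrace2 (X *m D *m X^t*) = \sum_b tens_block X b *m D *m (tens_block X b)^t*.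
Proof.
apply/matrixP => i j; rewrite !mxE summxE; apply: eq_bigr => b _.
rewrite !mxE; apply: eq_bigr => k _; rewrite !mxE.
by under [in RHS]eq_bigr do rewrite tens_blockE.
Qed.

Lemma tens_block_unitary p (X : 'M[C]_(m * n, p)) b :
  X \is unitarymx -> tens_block X b \is unitarymx.
Proof.
apply: rowsub_unitarymx => i j /(congr1 (@mxtens_unindex m n)).
by rewrite !mxtens_indexK => -[].
Qed.

Definition block_weight {p} (v : 'rV[C]_m) (X : 'M[C]_(m * n, p)) k :=
  \sum_b `|(v *m tens_block X b) 0 k| ^+ 2.

Lemma ptrace2_diag_form p (v : 'rV[C]_m) (X : 'M[C]_(m * n, p)) (a : 'rV[C]_p) :
  (v *m ptrace2 (X *m diag_mx a *m X^t*) *m v^t*) 0 0 =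
  \sum_k a 0 k * block_weight v X k.
Proof.
rewrite ptrace2_conj mulmx_sumr mulmx_suml summxE.
under eq_bigr do rewrite !mulmxA -mulmxA -trmxC_mul diag_mx_form.
rewrite exchange_big; apply: eq_bigr => k _.
by rewrite mulr_sumr.
Qed.

Lemma block_weight_ge0 p (v : 'rV[C]_m) (X : 'M[C]_(m * n, p)) k :
  0 <= block_weight v X k.
Proof. by apply: sumr_ge0 => b _; apply: exprn_ge0. Qed.

Lemma sum_block_weight p (v : 'rV[C]_m) (X : 'M[C]_(m * n, p)) :
  X \is unitarymx -> \sum_k block_weight v X k = n%:R * dotmx v v.
Proof.
move=> X_unitary; rewrite exchange_big /=.
under eq_bigr => b _.
  rewrite -dotmx_normE dotmx_mulmx_unitary ?tens_block_unitary //.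
  over.
by rewrite sumr_const card_ord mulr_natl.
Qed.

Lemma block_weight_le (v : 'rV[C]_m) (X : 'M[C]_(m * n)) k :
  X \is unitarymx -> block_weight v X k <= dotmx v v.
Proof.
move=> X_unitary.
pose u b := (col k (tens_block X b))^t*.
have entryE b : (v *m tens_block X b) 0 k = dotmx v (u b).
  by rewrite /u dotmxE trmxCK colE mulmxA -colE [RHS]mxE.
have col_norm1 : \sum_b dotmx (u b) (u b) = 1.
  rewrite -(unitarymx_col_norm k X_unitary) big_mxtens_index [RHS]exchange_big.
  apply: eq_bigr => b _; rewrite dotmx_normE; apply: eq_bigr => i _.
  by rewrite !mxE norm_conjC.
rewrite -[leRHS]mulr1 -col_norm1 mulr_sumr; apply: ler_sum => b _.
by rewrite entryE (CauchySchwarz (@dotmx C m)).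
Qed.

Lemma ptrace2_eigenvalue_le (X : 'M[C]_(m * n)) (a : 'rV[C]_(m * n))
    (S : {pred 'I_(m * n)}) (a0 l : C) :
  X \is unitarymx -> #|S| = n ->
  (forall k, k \in S -> a0 <= a 0 k) -> (forall k, k \notin S -> a 0 k <= a0) ->
  eigenvalue (ptrace2 (X *m diag_mx a *m X^t*)) l -> l <= \sum_(k in S) a 0 k.
Proof.
move=> X_unitary card_S aS aSc /eigenvalueP[v vP v_neq0].
have v_gt0 : 0 < dotmx v v by rewrite dnorm_gt0.
have lE : l * dotmx v v = \sum_k a 0 k * block_weight v X k.
  by rewrite -ptrace2_diag_form vP -scalemxAl mxE dotmxE.
rewrite -(ler_pM2r v_gt0) lE mulrC.
apply: bathtub_le aS aSc => [k|].
  by rewrite block_weight_ge0 block_weight_le.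
by rewrite sum_block_weight // card_S.
Qed.

End PartialTrace.

Lemma ptrace2_eigenvalue_le_sorted {C : numClosedFieldType} {m n}
    (X : 'M[C]_(m.+1 * n)) (a : 'rV[C]_(m.+1 * n)) (s : 'S_(m.+1 * n)) (l : C) :
  (0 < n)%N -> X \is unitarymx ->
  (forall i j : 'I_(m.+1 * n), (i <= j)%N -> a 0 (s j) <= a 0 (s i)) ->
  eigenvalue (ptrace2 (X *m diag_mx a *m X^t*)) l ->
  l <= \sum_(j < n) a 0 (s (mxtens_index (ord0, j))).
Proof.
move=> n_gt0 X_unitary a_sorted.
have last_lt : (n.-1 < m.+1 * n)%N.
  by rewrite (@leq_trans n) ?ltn_predL ?leq_pmull.
pose S := [pred k | (s^-1%g k < n)%N].
rewrite -big_perm_first_block (eq_bigl (mem S)) //.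
apply: (ptrace2_eigenvalue_le _ _ S (a 0 (s (Ordinal last_lt)))) => // [|k|k].
- by rewrite -sum1_card big_perm_first_block sum_nat_const card_ord muln1.
- move=> k_first; rewrite -[k](permKV s); apply: a_sorted.
  by rewrite /= -ltnS prednK.
- rewrite inE -leqNgt => k_late; rewrite -[k](permKV s); apply: a_sorted.
  exact: leq_trans (leq_pred n) k_late.
Qed.

Lemma ptrace2_tens_conj_diag {C : numClosedFieldType} m n (A : 'M[C]_m) (B : 'M[C]_n)
    (a : 'rV[C]_(m * n)) :
  B \is unitarymx ->
  ptrace2 ((A *t B) *m diag_mx a *m (A *t B)^t*) =
  A *m diag_mx (\row_i \sum_j a 0 (mxtens_index (i, j))) *m A^t*.
Proof.
move=> B_unitary; apply/matrixP => i i'.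
rewrite !mul_mx_diag !mxE.
transitivity (\sum_b \sum_j \sum_c
    A i j * a 0 (mxtens_index (j, c)) * (A i' j)^* * `|B b c| ^+ 2).
  apply: eq_bigr => b _; rewrite mxE big_mxtens_index.
  apply: eq_bigr => j _; apply: eq_bigr => c _.
  by rewrite !mxE !mxtens_indexK /= rmorphM normCK; ring.
rewrite (exchange_big _ _ (index_enum _)); apply: eq_bigr => j _.
rewrite exchange_big /= !mxE mulr_sumr mulr_suml; apply: eq_bigr => c _.
by rewrite -mulr_sumr unitarymx_col_norm // mulr1.
Qed.

Lemma ptrace2_perm_conj_eigenvalue {C : numClosedFieldType} m n (A : 'M[C]_m)
    (B : 'M[C]_n) (a : 'rV[C]_(m * n)) (s : 'S_(m * n)) i
    (W := A *t B) (U := W *m perm_mx s *m W^t*) :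
  A \is unitarymx -> B \is unitarymx ->
  eigenvalue (ptrace2 (U *m (W *m diag_mx a *m W^t*) *m U^t*))
    (\sum_j a 0 (s (mxtens_index (i, j)))).
Proof.
move=> A_unitary B_unitary.
have W_unitary : W \is unitarymx by apply: tensmx_unitary.
rewrite /U !trmxC_mul trmxCK !mulmxA !mulmxKtV //.
rewrite -(mulmxA W) -(mulmxA W) perm_mx_conj_diag ptrace2_tens_conj_diag //.
set b := \row_i _; have -> : \sum_j a 0 (s (mxtens_index (i, j))) = b 0 i.
  by rewrite mxE; apply: eq_bigr => j _; rewrite mxE.
exact: eigenvalue_unitary_conj_diag.
Qed.

Theorem lemma1 (C : numClosedFieldType) (d : nat) (hd : (2 <= d)%N)
  (rhoT : 'M[C]_2) (rhoA : 'M[C]_d) :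
  is_density rhoT -> is_density rhoA ->
  exists (VT : 'M[C]_2) (lamT : 'rV[C]_2) (VA : 'M[C]_d) (lamA : 'rV[C]_d)
         (s : 'S_(2 * d)),
    is_eigenbasis rhoT VT lamT /\ is_eigenbasis rhoA VA lamA /\
    let W := VT *t VA in
    let U0 := W *m perm_mx s *m adjmx W in
    exists l0 : C,
      eigenvalue (purif_channel U0 (rhoT *t rhoA)) l0 /\
      (forall l, eigenvalue (purif_channel U0 (rhoT *t rhoA)) l -> l <= l0) /\
      (forall (U : 'M[C]_(2 * d)), unitaryP U ->
        forall l, eigenvalue (purif_channel U (rhoT *t rhoA)) l -> l <= l0).
Proof.
move=> rhoT_density rhoA_density.
have [[rhoT_herm _ _] [rhoA_herm _ _]] := (rhoT_density, rhoA_density).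
have eT := hermitian_eigenbasis rhoT_herm.
have eA := hermitian_eigenbasis rhoA_herm.
set VT := _^t* in eT; set lamT := spectral_diag rhoT in eT.
set VA := _^t* in eA; set lamA := spectral_diag rhoA in eA.
set mu := tensrv lamT lamA.
have mu_real k : mu 0 k \is Num.real.
  rewrite mxE; apply/ger0_real/mulr_ge0.
    exact: density_eigenvalue_ge0 rhoT_density eT.
  exact: density_eigenvalue_ge0 rhoA_density eA.
have [s s_sorted] := sort_perm_exists mu_real.
exists VT, lamT, VA, lamA, s; split=> //; split=> // W U0.
have [W_unitary rhoE] : is_eigenbasis (rhoT *t rhoA) W mu := tensmx_eigenbasis eT eA.
have bound U : unitaryP U -> forall l,
    eigenvalue (purif_channel U (rhoT *t rhoA)) l ->
    l <= \sum_(c < d) mu 0 (s (mxtens_index (ord0, c))).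
  move=> U_unitary l; rewrite /purif_channel rhoE /adjmx !mulmxA -mulmxA -trmxC_mul.
  apply: ptrace2_eigenvalue_le_sorted => //; first exact: leq_trans hd.
  exact: mul_unitarymx.
eexists; split; last by split=> //; apply: bound; rewrite /unitaryP !mul_unitarymx
  ?perm_mx_unitary ?trmxC_unitary.
rewrite /purif_channel rhoE /U0 /adjmx.
by apply: ptrace2_perm_conj_eigenvalue; [case: eT | case: eA].
Qed.
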